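(* Let $X$ be a complex variety, $r\geq1$, $\mathfrak a=(\mathfrak a_1,\dots,\mathfrak a_r)\in(\mathscr{E}xp\mathscr M_{\mathbf C})^r$, and let $\sum_{\mathbf m\in\mathbf N^r}\mathfrak c_{\mathbf m}\mathbf T^{\mathbf m}$ be a formal series with coefficients in $\mathscr{E}xp\mathscr M_X$ which is convergent at $\mathfrak a$, in the sense that for every $A\in\mathbf Z$ there is $\mathbf m_0\in\mathbf N^r$ such that $w_X(\mathfrak c_{\mathbf m}\mathfrak a^{\mathbf m})<A$ for all $\mathbf m\not\leq\mathbf m_0$. Let $\varepsilon\in\{0,1\}^r\setminus\{\mathbf 0\}$ and $\langle\varepsilon,\mathbf m\rangle=\sum_i\varepsilon_im_i$. Then \[\sum_{\mathbf m'\leq\mathbf m}\mathfrak c_{\mathbf m'}\mathfrak a^{\mathbf m'}\mathbf L^{-\langle\varepsilon,\mathbf m-\mathbf m'\rangle}\] tends to $0$ in $\widehat{\mathscr{E}xp\mathscr M_X}$ as $\min_{1\leq i\leq r}m_i\to\infty$ (i.e. for every $A$ its weight is $<A$ once $\min_i m_i$ is large enough). If moreover the series is $\rho$-weight-linearly convergent at $\mathfrak a$ for some $\rho\in\mathbf Z_{\geq1}^r$, then there exist $\delta>0$ and $i_0\in\mathbf N$ such that \[w_X\Big(\sum_{\mathbf m'\leq\mathbf m}\mathfrak c_{\mathbf m'}\mathfrak a^{\mathbf m'}\mathbf L^{-\langle\varepsilon,\mathbf m-\mathbf m'\rangle}\Big)<-\delta\langle\varepsilon,\mathbf m\rangle\]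 whenever $\langle\varepsilon,\mathbf m\rangle\geq i_0$.
   Context: $\mathscr{E}xp\mathscr M_X$ is the Grothendieck ring of varieties with exponentials over $X$ localised at $\mathbf L$, with Bilu's weight function $w_X:\mathscr{E}xp\mathscr M_X\to\mathbf Z\cup\{-\infty\}$ (properties: $w_X(0)=-\infty$, $w_X(\mathfrak a+\mathfrak a')\leq\max(w_X(\mathfrak a),w_X(\mathfrak a'))$, $w_X(\mathbf L^m\mathfrak a)=w_X(\mathfrak a)+2m$, submultiplicativity $w_X(\mathfrak a\mathfrak a')\le w_X(\mathfrak a)+w_X(\mathfrak a')$). $\widehat{\mathscr{E}xp\mathscr M_X}=\varprojlim_n \mathscr{E}xp\mathscr M_X/W_{\leq n}$ where $W_{\leq n}=\{\mathfrak a: w_X(\mathfrak a)\leq n\}$. On $\mathbf N^r$, $\mathbf m'\leq\mathbf m$ means $m'_i\leq m_i$ for all $i$; $\mathfrak a^{\mathbf m}=\prod_i\mathfrak a_i^{m_i}$. A series $\sum\mathfrak c_{\mathbf m}\mathbf T^{\mathbf m}$ is $\rho$-weight-linearly convergent at $\mathfrak a$ if there is $\delta>0$ with $w_X(\mathfrak c_{\mathbf m}\mathfrak a^{\mathbf m})<-\delta\langle\rho,\mathbf m\rangle$ for all $\mathbf m$ with $\langle\rho,\mathbf m\rangle=\sum_i\rho_im_i$ sufficiently large. *)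

From mathcomp Require Import all_boot all_order all_algebra.
Set Implicit Arguments. Unset Strict Implicit. Unset Printing Implicit Defensive.
Import Order.TTheory GRing.Theory Num.Theory.
Local Open Scope ring_scope.

(* Weights in Z ∪ {-oo}: [None] stands for -oo. *)
Definition wle (x y : option int) : bool :=
  match x, y with
  | None, _ => true
  | Some _, None => false
  | Some n, Some m => n <= m
  end.
Definition wmax (x y : option int) : option int :=
  match x, y with
  | None, y => y
  | x, None => x
  | Some n, Some m => Some (Num.max n m)
  end.
Definition wadd (x y : option int) : option int :=
  match x, y with
  | Some n, Some m => Some (n + m)
  | _, _ => None
  end.
Definition wlt (x : option int) (A : int) : bool :=
  if x is Some n then n < A else true.
Definition wltq (x : option int) (q : rat) : bool :=
  if x is Some n then (n%:~R : rat) < q else true.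

(* The properties of Bilu's weight function w_X on ExpM_X (L inverted). *)
Record weight_axioms (R : comUnitRingType) (L : R) (w : R -> option int) : Prop := {
  wL_unit : L \is a GRing.unit;
  w0 : w 0 = None;
  wD : forall a b, wle (w (a + b)) (wmax (w a) (w b));
  wLz : forall (m : int) a, w (L ^ m * a) = wadd (Some (2 * m)) (w a);
  wM : forall a b, wle (w (a * b)) (wadd (w a) (w b))
}.

(* multi-indices in N^r are functions 'I_r -> nat *)
Definition leqv r (m' m : 'I_r -> nat) : Prop := forall i, (m' i <= m i)%N.
Definition pairing r (e m : 'I_r -> nat) : nat := (\sum_(i < r) e i * m i)%N.
Definition mpow (R : comUnitRingType) r (a : 'I_r -> R) (m : 'I_r -> nat) : R :=
  \prod_(i < r) a i ^+ m i.

(* \sum_{m' <= m} F m' : m' ranges over the box, encoded via ordinals *)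
Definition boxsum (R : comUnitRingType) r (m : 'I_r -> nat) (F : ('I_r -> nat) -> R) : R :=
  \sum_(k : {ffun 'I_r -> 'I_(\max_(i < r) m i).+1} | [forall i, (k i <= m i)%N])
     F (fun i => nat_of_ord (k i)).

Definition eps_partial (R : comUnitRingType) r (L : R) (c : ('I_r -> nat) -> R)
  (a : 'I_r -> R) (eps : 'I_r -> nat) (m : 'I_r -> nat) : R :=
  boxsum m (fun m' => c m' * mpow a m' * L ^- pairing eps (fun i => (m i - m' i)%N)).

Definition conv_at (R : comUnitRingType) r (w : R -> option int)
  (c : ('I_r -> nat) -> R) (a : 'I_r -> R) : Prop :=
  forall A : int, exists m0 : 'I_r -> nat,
    forall m, ~ leqv m m0 -> wlt (w (c m * mpow a m)) A.

Definition wlin_conv_at (R : comUnitRingType) r (w : R -> option int)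
  (c : ('I_r -> nat) -> R) (a : 'I_r -> R) (rho : 'I_r -> nat) : Prop :=
  exists2 delta : rat, 0 < delta &
    exists K : nat, forall m, (K <= pairing rho m)%N ->
      wltq (w (c m * mpow a m)) (- delta * (pairing rho m)%:R).

From mathcomp Require Import all_boot all_order all_algebra.
From mathcomp Require Import zify lra.
From Stdlib Require Import FunctionalExtensionality.
Import Order.TTheory GRing.Theory Num.Theory.
Local Open Scope ring_scope.

(* Write [D(m') = <eps, m - m'>].  Since [w(L^-k x) = w(x) - 2k]
   and the weight of a finite sum is at most the maximum of the weights of its
   terms, [w(sum_{m' <= m} c_{m'} a^{m'} L^{-D(m')}) < q] as soon as every
   single term satisfies [w(c_{m'} a^{m'}) < q + 2 D(m')]  (lemma
   [eps_partial_wltq]).  Each term is then bounded by one of two estimates: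
   - if [m'] is large (outside a box, resp. of large [rho]-degree), the
     convergence hypothesis bounds [w(c_{m'} a^{m'})] directly;
   - the finitely many remaining [m'] lie in a fixed box, on which the weights
     are bounded by a constant [B] (lemma [bound_box]); the factor
     [L^{-D(m')}] then wins because [D(m')] is large once [m] is large. *)

Lemma wle_wltq x y q : wle x y -> wltq y q -> wltq x q.
Proof.
case: x => [n|] //; case: y => [m|] //= hnm hm.
by apply: le_lt_trans hm; rewrite ler_int.
Qed.

Lemma wltq_le x q q' : wltq x q -> q <= q' -> wltq x q'.
Proof. by case: x => [n|] //= h1 h2; exact: lt_le_trans h2. Qed.

Lemma wltq_max x y q : wltq x q -> wltq y q -> wltq (wmax x y) q.
Proof. by case: x => [n|]; case: y => [m|] //= hn hm; case: (leP n m). Qed.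

Lemma wltq_add z x q : wltq x (q - z%:~R) -> wltq (wadd (Some z) x) q.
Proof. by case: x => [n|] //= h; rewrite intrD; lra. Qed.

Lemma wlt_wltq x (A : int) : wlt x A = wltq x A%:~R.
Proof. by case: x => [n|] //=; rewrite ltr_int. Qed.

Lemma bound_box {r} (f : ('I_r -> nat) -> option int) (b : 'I_r -> nat) :
  exists B : nat, forall m, (forall i, m i <= b i)%N -> wle (f m) (Some B%:Z).
Proof.
set M := (\max_(i < r) b i)%N.
pose g (k : {ffun 'I_r -> 'I_M.+1}) :=
  if f (fun i => nat_of_ord (k i)) is Some n then `|n|%N else 0%N.
exists (\max_k g k)%N => m hm.
pose k := [ffun i => (inord (m i) : 'I_M.+1)].
have hk : (fun i => nat_of_ord (k i)) = m.
  apply: functional_extensionality => i; rewrite ffunE inordK //.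
  by rewrite ltnS; apply: leq_trans (hm i) _; exact: (leq_bigmax i).
have := leq_bigmax k (F := g); rewrite /g hk.
case: (f m) => [n|] //= h.
apply: le_trans (_ : (`|n|%N)%:Z <= _); first by rewrite abszE ler_norm.
by rewrite lez_nat.
Qed.

Lemma pairing_ge {r} (e m : 'I_r -> nat) i : (e i * m i <= pairing e m)%N.
Proof. by rewrite /pairing (bigD1 i) //= leq_addr. Qed.

Lemma pairing_split {r} (e m m' : 'I_r -> nat) : (forall i, m' i <= m i)%N ->
  pairing e m = (pairing e m' + pairing e (fun i => m i - m' i))%N.
Proof.
move=> h; rewrite /pairing -big_split /=; apply: eq_bigr => i _.
by rewrite -mulnDr subnKC.
Qed.

Lemma pairing_mono r (e rho m : 'I_r -> nat) : (forall i, e i <= rho i)%N ->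
  (pairing e m <= pairing rho m)%N.
Proof. by move=> h; apply: leq_sum => i _; apply: leq_mul. Qed.

Section EpsPartial.
Variables (R : comUnitRingType) (L : R) (w : R -> option int).
Hypothesis hw : weight_axioms L w.
Variable r : nat.
Variables (c : ('I_r -> nat) -> R) (a : 'I_r -> R) (e : 'I_r -> nat).

Lemma wltq_sum (I : finType) (P : pred I) (F : I -> R) (q : rat) :
  (forall k, P k -> wltq (w (F k)) q) -> wltq (w (\sum_(k | P k) F k)) q.
Proof.
move=> hF; apply: (big_ind (fun x => wltq (w x) q)) => //.
- by rewrite (w0 hw).
- by move=> x y hx hy; apply: wle_wltq (wD hw x y) _; exact: wltq_max.
Qed.

Lemma wltq_mulLV (t : R) (k : nat) (q : rat) :
  wltq (w t) (q + (2 * k)%:R) -> wltq (w (t * L ^- k)) q.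
Proof.
move=> h; rewrite exprnN mulrC (wLz hw); apply: wltq_add.
suff -> : q - (2 * - (k%:Z))%:~R = q + (2 * k)%:R :> rat by [].
by rewrite mulrN intrN opprK.
Qed.

Lemma eps_partial_wltq (m : 'I_r -> nat) (q : rat) :
  (forall m', (forall i, m' i <= m i)%N ->
     wltq (w (c m' * mpow a m')) (q + (2 * pairing e (fun i => (m i - m' i)%N))%:R)) ->
  wltq (w (eps_partial L c a e m)) q.
Proof.
move=> h; apply: wltq_sum => k hk; apply: wltq_mulLV; apply: h => i.
exact: (forallP hk i).
Qed.

Lemma eps_partial_tends_to_zero : (exists i, 0 < e i)%N -> conv_at w c a ->
  forall A : int, exists N : nat, forall m, (forall i, N <= m i)%N ->
    wlt (w (eps_partial L c a e m)) A.
Proof.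
move=> [i1 he1] hconv A.
have [m0 hm0] := hconv A.
have [B hB] := bound_box (fun m' => w (c m' * mpow a m')) m0.
exists (m0 i1 + B + `|A|%N + 1)%N => m hm.
rewrite wlt_wltq; apply: eps_partial_wltq => m' _.
set D := pairing e (fun i => (m i - m' i)%N).
have hD : (m i1 - m' i1 <= D)%N.
  by apply: leq_trans (pairing_ge e _ i1); rewrite leq_pmull.
have hA2D : A%:~R + (2 * D)%:R = (A + (2 * D)%N%:Z)%:~R :> rat by rewrite intrD.
have [/forallP in_box|out_box] := boolP [forall i, m' i <= m0 i]%N.
  (* [m'] in the box: [B < A + 2D] since [D >= m_{i1} - m0_{i1}] is large. *)
  apply: wle_wltq (hB m' in_box) _ => /=; rewrite hA2D ltr_int.
  have hm'1 : (m' i1 <= m0 i1)%N := in_box i1.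
  have hm1 := hm i1.
  have : A <= `|A|%N%:Z by rewrite abszE ler_norm.
  lia.
(* [m'] outside the box: the convergence hypothesis applies. *)
apply: wltq_le (_ : A%:~R <= _); last by rewrite lerDl ler0n.
rewrite -wlt_wltq; apply: hm0 => m'_le; move/negP: out_box; apply.
by apply/forallP => i; exact: m'_le.
Qed.

Lemma eps_partial_linear_decay (rho : 'I_r -> nat) :
  (forall i, e i <= rho i)%N -> (forall i, 1 <= rho i)%N ->
  wlin_conv_at w c a rho ->
  exists2 delta : rat, 0 < delta & exists i0 : nat, forall m,
    (i0 <= pairing e m)%N ->
    wltq (w (eps_partial L c a e m)) (- delta * (pairing e m)%:R).
Proof.
move=> e_le_rho rho_pos [delta hdelta [K hK]].
have [B hB] := bound_box (fun m' => w (c m' * mpow a m')) (fun _ => K).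
set d := Num.min delta 1.
have hd0 : 0 < d by rewrite lt_min hdelta ltr01.
have hd1 : d <= delta by rewrite ge_min lexx.
have hd2 : d <= 1 by rewrite ge_min lexx orbT.
exists d => //; exists (B + 2 * K + 1)%N => m hm.
apply: eps_partial_wltq => m' hm'.
set D := pairing e (fun i => (m i - m' i)%N).
have hsplit := pairing_split e m m' hm'.
set E := pairing e m in hm hsplit *.
set E' := pairing e m' in hsplit.
set P' := pairing rho m'.
have hEP : (E' <= P')%N by exact: pairing_mono.
have hE : (E%:R : rat) = E'%:R + D%:R by rewrite hsplit natrD.
have hD0 : (0 : rat) <= D%:R by rewrite ler0n.
have hE'0 : (0 : rat) <= E'%:R by rewrite ler0n.
have [hKP|hPK] := leqP K P'.
  (* Large [rho]-degree: [-delta P' <= -d E' = -d E + d D <= -d E + 2 D]. *)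
  apply: wltq_le (hK m' hKP) _.
  have h1 : d * E'%:R <= delta * P'%:R.
    by apply: ler_pM; rewrite ?ler_nat // ltW.
  have h2 : d * D%:R <= D%:R by rewrite ler_piMl.
  rewrite hE mulrDr; lra.
(* Small [rho]-degree: [m'] lies in the box [m' <= K], so its weight is at
   most [B], while [-d E + 2 D >= E - 2 K > B]. *)
have in_box : forall i, (m' i <= K)%N.
  move=> i; apply/ltnW/(leq_ltn_trans _ hPK).
  by apply: leq_trans (pairing_ge rho m' i); rewrite leq_pmull.
apply: wle_wltq (hB m' in_box) _ => /=.
change ((B%:Z)%:~R : rat) with (B%:R : rat).
have hEB : (B%:R + 2 * K%:R + 1 : rat) <= E%:R.
  by move: hm; rewrite -(ler_nat rat) !natrD; lra.
have hE'K : (E'%:R : rat) + 1 <= K%:R.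
  by move: (leq_ltn_trans hEP hPK); rewrite -(ler_nat rat) -natr1.
have h3 : d * E%:R <= E%:R by rewrite ler_piMl // ler0n.
lra.
Qed.

End EpsPartial.

Theorem lemma2p2
  (RC RX : comUnitRingType) (phi : {rmorphism RC -> RX})
  (LC : RC) (LX : RX) (w : RX -> option int)
  (hw : weight_axioms LX w) (hL : phi LC = LX)
  (r : nat) (hr : (1 <= r)%N)
  (a : 'I_r -> RC) (c : ('I_r -> nat) -> RX)
  (eps : 'I_r -> bool) (heps : exists i, eps i)
  (hconv : conv_at w c (fun i => phi (a i))) :
  (forall A : int, exists N : nat, forall m : 'I_r -> nat,
      (forall i, (N <= m i)%N) ->
      wlt (w (eps_partial LX c (fun i => phi (a i)) (fun i => nat_of_bool (eps i)) m)) A)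
  /\
  (forall rho : 'I_r -> nat, (forall i, (1 <= rho i)%N) ->
     wlin_conv_at w c (fun i => phi (a i)) rho ->
     exists2 delta : rat, 0 < delta &
       exists i0 : nat, forall m : 'I_r -> nat,
         (i0 <= pairing (fun i => nat_of_bool (eps i)) m)%N ->
         wltq (w (eps_partial LX c (fun i => phi (a i)) (fun i => nat_of_bool (eps i)) m))
              (- delta * (pairing (fun i => nat_of_bool (eps i)) m)%:R)).
Proof.
split.
  apply: eps_partial_tends_to_zero => //.
  by have [i hi] := heps; exists i; rewrite hi.
move=> rho rho_pos; apply: eps_partial_linear_decay => // i.
by case: (eps i) => //; exact: rho_pos.
Qed.
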